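(* Consider the Online Submodular Bipartite Matching problem (defined in the context) with arbitrary arrival rates $r_v\in[0,1]$. Let $\mathbf{x}^*\in[0,1]^E$ be a feasible solution of the program: maximize $F(\mathbf{x})$ subject to $\sum_{e\in E(v)} x_e \le r_v$ for all $v\in V$, $\sum_{e\in E(u)} x_e\le 1$ for all $u\in U$, $0\le x_e\le 1$ for all $e\in E$, obtained by the continuous greedy algorithm so that $F(\mathbf{x}^* )\ge (1-1/e)\mathbb{E}[\mathrm{OPT}]$. Consider the online algorithm MMP-ALG: when $v$ arrives at time $t$, sample at most one edge $e\in E(v)$, each $e$ with probability $x^*_e/r_v$; if $e=(u,v)$ is sampled and $u$ is still available, match $e$, otherwise skip. Then MMP-ALG achieves a competitive ratio of at least $(1-1/e)^2$ when $|U|=o(\sqrt{T})$ and $T\to\infty$.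
   Context: Online Submodular Bipartite Matching (OSBM): we are given a bipartite graph $G=(U,V,E)$ with $m=|E|$, where $U$ are offline vertices and $V$ are online vertex types, a finite known horizon $T$, and a known probability distribution $\{p_v\}_{v\in V}$ with $\sum_{v} p_v \le 1$. In each round $t\in\{1,\dots,T\}$, independently across rounds, at most one vertex of $V$ arrives: $v$ arrives with probability $p_v$. Let $r_v = T p_v \in [0,1]$. When $v$ arrives, the algorithm must immediately and irrevocably either reject it or match it to a still available neighbor $u\in U$; each $u\in U$ has unit capacity. We have value-oracle access to a non-negative monotone submodular $f:2^E\to\mathbb{R}_{\ge0}$ with $f(\emptyset)=0$; the goal is to maximize $\mathbb{E}[f(\mathcal{M})]$ for the final set $\mathcal{M}$ of matched edges. $\mathbb{E}[\mathrm{OPT}]$ is the expectation over arrival sequences $S$ of the maximum of $f$ over feasible hindsight matchings for $S$; the competitive ratio of ALG is the minimum over instances of $\mathbb{E}[\mathrm{ALG}]/\mathbb{E}[\mathrm{OPT}]$. For $w\in U\cup V$, $E(w)$ is the set of edges incident to $w$. $F:[0,1]^E\to\mathbb{R}_{\ge0}$ is the multilinear extension of $f$: $F(\mathbf{x})=\sum_{S\subseteq E}\prod_{e\in S}x_e\prod_{e\notin S}(1-x_e) f(S)$, i.e. the expected value of $f$ on a random set containing each $e$ independently with probability $x_e$. *)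

From HB Require Import structures.
From mathcomp Require Import all_boot all_order all_algebra.
From mathcomp Require Import reals.
From mathcomp.analysis Require Import sequences exp.
Set Implicit Arguments. Unset Strict Implicit. Unset Printing Implicit Defensive.
Import Order.TTheory GRing.Theory Num.Theory.
Local Open Scope ring_scope.

(* A bipartite graph G = (U, V, E): offline vertices U, online types V,
   edges Ed, with endpoint maps eu : Ed -> U, ev : Ed -> V
   (the graph is simple: e |-> (eu e, ev e) is injective). *)

Section OSBM.
Variables (R : realType) (U V Ed : finType) (eu : Ed -> U) (ev : Ed -> V).

Definition monotone_submodular (f : {set Ed} -> R) : Prop :=
  [/\ f set0 = 0,
      (forall A, 0 <= f A),
      (forall A B : {set Ed}, A \subset B -> f A <= f B) &
      (forall A B : {set Ed}, f (A :|: B) + f (A :&: B) <= f A + f B)].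

Definition multilinear (f : {set Ed} -> R) (x : Ed -> R) : R :=
  \sum_(S : {set Ed})
     ((\prod_(e in S) x e) * (\prod_(e in ~: S) (1 - x e))) * f S.

(* feasibility for the LP with r_v = T p_v *)
Definition lp_feasible (T : nat) (p : V -> R) (x : Ed -> R) : Prop :=
  [/\ (forall e, 0 <= x e <= 1),
      (forall v, \sum_(e | ev e == v) x e <= T%:R * p v) &
      (forall u, \sum_(e | eu e == u) x e <= 1)].

(* one round: None = no arrival, Some v = type v arrives *)
Definition arrival_prob (p : V -> R) (a : option V) : R :=
  match a with None => 1 - \sum_v p v | Some v => p v end.

Definition seq_prob (T : nat) (p : V -> R) (s : {ffun 'I_T -> option V}) : R :=
  \prod_(t < T) arrival_prob p (s t).

Definition hindsight_feasible (T : nat) (s : {ffun 'I_T -> option V})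
  (M : {set Ed}) : bool :=
  [forall u, #|[set e in M | eu e == u]| <= 1]%N &&
  [forall v, #|[set e in M | ev e == v]| <= #|[set t | s t == Some v]|]%N.

Definition OPT (f : {set Ed} -> R) (T : nat) (s : {ffun 'I_T -> option V}) : R :=
  \big[Num.max/0]_(M : {set Ed} | hindsight_feasible s M) f M.

Definition E_OPT (f : {set Ed} -> R) (T : nat) (p : V -> R) : R :=
  \sum_(s : {ffun 'I_T -> option V}) seq_prob p s * OPT f s.

Definition sample_prob (T : nat) (p : V -> R) (x : Ed -> R)
  (a : option V) (c : option Ed) : R :=
  match a, c with
  | None, None => 1
  | None, Some _ => 0
  | Some v, Some e => if ev e == v then x e / (T%:R * p v) else 0
  | Some v, None => 1 - \sum_(e | ev e == v) x e / (T%:R * p v)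
  end.

Definition alg_step (M : {set Ed}) (a : option V) (c : option Ed) : {set Ed} :=
  match a, c with
  | Some v, Some e =>
      if (ev e == v) && [forall e' in M, eu e' != eu e] then e |: M else M
  | _, _ => M
  end.

Definition alg_run (T : nat) (s : {ffun 'I_T -> option V})
  (c : {ffun 'I_T -> option Ed}) : {set Ed} :=
  foldl (fun M t => alg_step M (s t) (c t)) set0 (enum 'I_T).

Definition E_ALG (f : {set Ed} -> R) (T : nat) (p : V -> R) (x : Ed -> R) : R :=
  \sum_(s : {ffun 'I_T -> option V}) \sum_(c : {ffun 'I_T -> option Ed})
     (\prod_(t < T) (arrival_prob p (s t) * sample_prob T p x (s t) (c t)))
       * f (alg_run s c).

End OSBM.

From HB Require Import structures.
From mathcomp Require Import all_boot all_order all_algebra.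
From mathcomp Require Import reals.
From mathcomp.analysis Require Import sequences exp.
From mathcomp Require Import ring lra.
Set Implicit Arguments. Unset Strict Implicit. Unset Printing Implicit Defensive.
Import Order.TTheory GRing.Theory Num.Theory.
Local Open Scope ring_scope.

(* Let Q(A) be the expected value of f on the matching A extended by an
   independent x-rounding of the edges whose offline endpoint is still free
   in A, so that Q(emptyset) = F(x).  In each round MMP-ALG proposes an edge
   e with probability x_e / T and takes it if its endpoint is free.
   Submodularity bounds the expected one-round gain of f below by
   (Q(A) - f(A)) / T, and the capacities sum_{e in E(u)} x_e <= 1 make Q
   nondecreasing in expectation.  Hence, with beta_k = 1 - (1 - 1/T)^k, the
   expected value of k remaining rounds from A is at least
   (1 - beta_k) f(A) + beta_k Q(A), and
   E[ALG] >= beta_T F(x) >= (1 - 1/e) F(x) >= (1 - 1/e)^2 E[OPT]. *)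

Lemma foldl_map (T1 T2 S : Type) (g : S -> T2 -> S) (h : T1 -> T2) z s :
  foldl g z (map h s) = foldl (fun z t => g z (h t)) z s.
Proof. by elim: s z => //= t s IH z; rewrite IH. Qed.

Lemma eq_foldl (T S : Type) (g1 g2 : S -> T -> S) :
  (forall z t, g1 z t = g2 z t) -> forall z s, foldl g1 z s = foldl g2 z s.
Proof. by move=> eq_g z s; elim: s z => //= t s IH z; rewrite eq_g IH. Qed.

Lemma sum_option (R : nmodType) (X : finType) (F : option X -> R) :
  \sum_a F a = F None + \sum_v F (Some v).
Proof.
rewrite (bigD1 None) //=; congr (_ + _).
rewrite (reindex_omap Some id) //=; last by case.
by apply: eq_bigl => v; rewrite eqxx.
Qed.

Definition ffun_cons (X : Type) k (a : X) (s : {ffun 'I_k -> X}) : {ffun 'I_k.+1 -> X} :=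
  [ffun i => if unlift ord0 i is Some j then s j else a].

Lemma ffun_cons0 (X : Type) k a (s : {ffun 'I_k -> X}) : ffun_cons a s ord0 = a.
Proof. by rewrite ffunE unlift_none. Qed.

Lemma ffun_consS (X : Type) k a (s : {ffun 'I_k -> X}) j : ffun_cons a s (lift ord0 j) = s j.
Proof. by rewrite ffunE liftK. Qed.

Lemma sum_ffun_ordS (R : nmodType) (X : finType) k (G : {ffun 'I_k.+1 -> X} -> R) :
  \sum_s G s = \sum_a \sum_(s : {ffun 'I_k -> X}) G (ffun_cons a s).
Proof.
rewrite pair_big (reindex (fun p : X * {ffun 'I_k -> X} => ffun_cons p.1 p.2)) //=.
exists (fun s : {ffun 'I_k.+1 -> X} => (s ord0, [ffun j => s (lift ord0 j)])).
  move=> [a s] _ /=; rewrite ffun_cons0; congr pair; apply/ffunP => j.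
  by rewrite ffunE ffun_consS.
move=> s _; apply/ffunP => i; rewrite ffunE.
by case: unliftP => [j ->|->]; rewrite ?ffunE.
Qed.

Lemma sum_ffun_ord0 (R : nmodType) (X : finType) (G : {ffun 'I_0 -> X} -> R) s0 :
  \sum_s G s = G s0.
Proof.
rewrite (eq_bigr (fun _ => G s0)) => [|s _]; last by congr G; apply/ffunP => -[].
by rewrite sumr_const card_ffun card_ord expn0.
Qed.

Lemma submod_setU_le (R : realDomainType) (T : finType) (f : {set T} -> R) :
  (forall A B, f (A :|: B) + f (A :&: B) <= f A + f B) ->
  forall B C : {set T}, f (B :|: C) <= f B + \sum_(e in C) (f (e |: B) - f B).
Proof.
move=> fsub B C; rewrite -big_enum -{1}(set_enum C).
elim: (enum C) (enum_uniq C) => [|e s IH] /=.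
  by rewrite big_nil set_nil setU0 addr0.
case/andP=> es /IH {}IH; rewrite set_cons big_cons.
have := fsub (B :|: [set i in s]) (e |: B).
have -> : (B :|: [set i in s]) :|: (e |: B) = B :|: (e |: [set i in s]).
  by apply/setP => i; rewrite !inE; case: (i \in B); rewrite /= ?orbT // orbF orbC.
have -> : (B :|: [set i in s]) :&: (e |: B) = B.
  apply/setP => i; rewrite !inE; case: (i =P e) => [->|_] /=.
    by rewrite (negbTE es); case: (e \in B).
  by case: (i \in B); rewrite ?andbF.
lra.
Qed.

Section MultilinearExpectation.
Variables (R : realType) (Ed : finType) (x : Ed -> R).

Definition rounding_weight (S : {set Ed}) : R :=
  \prod_i (if i \in S then x i else 1 - x i).

Lemma multilinearE (g : {set Ed} -> R) :
  multilinear g x = \sum_S rounding_weight S * g S.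
Proof.
apply: eq_bigr => S _; congr (_ * _).
rewrite /rounding_weight [RHS](bigID (mem S)) /=; congr (_ * _).
  by apply: eq_bigr => i ->.
rewrite [LHS](eq_bigl (fun i => i \notin S)) => [|i]; last by rewrite in_setC.
by apply: eq_bigr => i /negbTE ->.
Qed.

Lemma eq_multilinear (g h : {set Ed} -> R) :
  (forall S, g S = h S) -> multilinear g x = multilinear h x.
Proof. by move=> gh; apply: eq_bigr => S _; rewrite gh. Qed.

Lemma multilinear_cst c : multilinear (fun _ => c) x = c.
Proof.
rewrite multilinearE -mulr_suml /rounding_weight.
rewrite -(@bigA_distr R 0 1 *%R +%R Ed x (fun i => 1 - x i)) big1 ?mul1r // => i _.
by rewrite /= subrKC.
Qed.

Lemma multilinearD (g h : {set Ed} -> R) :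
  multilinear (fun S => g S + h S) x = multilinear g x + multilinear h x.
Proof. by rewrite !multilinearE -big_split; apply: eq_bigr => S _; rewrite mulrDr. Qed.

Lemma multilinear_sum (I : finType) (P : pred I) (g : I -> {set Ed} -> R) :
  multilinear (fun S => \sum_(i | P i) g i S) x = \sum_(i | P i) multilinear (g i) x.
Proof.
rewrite multilinearE; under eq_bigr do rewrite mulr_sumr.
by rewrite exchange_big; apply: eq_bigr => i _; rewrite multilinearE.
Qed.

Lemma rounding_weight_setU1 e (S : {set Ed}) : e \notin S ->
  x e * rounding_weight S = (1 - x e) * rounding_weight (e |: S).
Proof.
move=> eS; rewrite /rounding_weight (bigD1 e) //= (bigD1 e (P := predT)) //=.
rewrite (negbTE eS) setU11 mulrCA; congr (_ * (_ * _)).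
by apply: eq_bigr => i ie; rewrite in_setU1 (negbTE ie).
Qed.

Lemma multilinear_mem e (g : {set Ed} -> R) :
  multilinear (fun S => (e \in S)%:R * g S) x = x e * multilinear (fun S => g (e |: S)) x.
Proof.
pose P := fun S : {set Ed} => e \in S.
rewrite !multilinearE mulr_sumr (bigID P) [RHS](bigID P) /= {}/P.
rewrite [X in _ + X]big1 ?addr0; last by move=> S /negbTE->; rewrite mul0r mulr0.
have -> : \sum_(S : {set Ed} | e \notin S) x e * (rounding_weight S * g (e |: S)) =
          \sum_(S : {set Ed} | e \in S) (1 - x e) * (rounding_weight S * g S).
  rewrite (reindex_onto (fun S => S :\ e) (fun S => e |: S)) /= => [|S eS]; last first.
    by rewrite setU1K.
  apply: eq_big => [S|S /andP[_ /eqP eS]].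
    by rewrite setD11 /=; apply/eqP/idP => [<-|eS]; [exact: setU11 | exact: setD1K].
  by rewrite eS mulrA rounding_weight_setU1 ?setD11 // eS mulrA.
rewrite -big_split; apply: eq_bigr => S eS /=.
by rewrite eS mul1r (setUidPr _) ?sub1set // -mulrDl subrKC mul1r.
Qed.

Hypothesis x01 : forall e, 0 <= x e <= 1.

Lemma rounding_weight_ge0 S : 0 <= rounding_weight S.
Proof.
apply: prodr_ge0 => i _; have /andP[x0 x1] := x01 i.
by case: (i \in S); rewrite ?subr_ge0.
Qed.

Lemma ler_multilinear (g h : {set Ed} -> R) :
  (forall S, g S <= h S) -> multilinear g x <= multilinear h x.
Proof.
move=> gh; rewrite !multilinearE; apply: ler_sum => S _.
by apply: ler_wpM2l; [exact: rounding_weight_ge0 | exact: gh].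
Qed.

Lemma multilinear_ge0 (g : {set Ed} -> R) :
  (forall S, 0 <= g S) -> 0 <= multilinear g x.
Proof. by move=> g0; rewrite -(multilinear_cst 0); apply: ler_multilinear. Qed.

End MultilinearExpectation.

Section Potential.
Variables (R : realType) (U Ed : finType) (eu : Ed -> U).
Variables (f : {set Ed} -> R) (x : Ed -> R).

Definition uncovered (A : {set Ed}) (u : U) : bool := [forall e in A, eu e != u].

Definition augment (A : {set Ed}) (e : Ed) : {set Ed} :=
  if uncovered A (eu e) then e |: A else A.

Definition potential (A : {set Ed}) : R :=
  multilinear (fun S => f (A :|: [set e in S | uncovered A (eu e)])) x.

Lemma uncovered_setU1 e A u : uncovered (e |: A) u = (eu e != u) && uncovered A u.
Proof.
apply/forall_inP/andP => [Hu|[eu_u /forall_inP Hu] i /setU1P[->|/Hu]] //.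
split; first exact: Hu (setU11 _ _).
by apply/forall_inP => i iA; apply: Hu; rewrite setU1r.
Qed.

Lemma potential0 : potential set0 = multilinear f x.
Proof.
apply: eq_multilinear => S; congr f; apply/setP => e.
by rewrite set0U inE andb_idr // => _; apply/forall_inP => i; rewrite inE.
Qed.

Hypothesis hf : monotone_submodular f.
Hypothesis x01 : forall e, 0 <= x e <= 1.
Hypothesis cap_u : forall u, \sum_(e | eu e == u) x e <= 1.

Let f_mono (A B : {set Ed}) : A \subset B -> f A <= f B.
Proof. by case: hf => _ _ + _; apply. Qed.

Let f_submod (B C : {set Ed}) :
  f (B :|: C) <= f B + \sum_(e in C) (f (e |: B) - f B).
Proof. by case: hf => _ _ _ fsub; apply: submod_setU_le. Qed.

Lemma potential_sub_le A :
  potential A - f A <= \sum_e x e * (f (augment A e) - f A).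
Proof.
have -> : potential A - f A =
    multilinear (fun S => f (A :|: [set e in S | uncovered A (eu e)]) + - f A) x.
  by rewrite multilinearD multilinear_cst.
set gain := fun e => f (augment A e) - f A.
have -> : \sum_e x e * gain e = multilinear (fun S => \sum_e (e \in S)%:R * gain e) x.
  by rewrite multilinear_sum; apply: eq_bigr => e _; rewrite multilinear_mem multilinear_cst.
apply: ler_multilinear => // S; rewrite lerBlDl (le_trans (f_submod _ _)) // lerD2l.
rewrite big_mkcond /=; apply: ler_sum => e _; rewrite !inE /gain /augment.
by case: (e \in S); case: (uncovered A (eu e)); rewrite ?mul1r ?mul0r ?subrr.
Qed.

Section AtVertex.
Variables (A : {set Ed}) (u : U).
Hypothesis Au : uncovered A u.

(* The rounded edges that Q(A) and Q(e |: A) share, for every e in E(u). *)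
Let base (S : {set Ed}) := A :|: [set i in S | uncovered A (eu i) && (eu i != u)].
Let gain e S := f (e |: base S) - f (base S).

Lemma potential_le_base :
  potential A <= multilinear (f \o base) x + \sum_(e | eu e == u) x e * multilinear (gain e) x.
Proof.
have baseU1 e S : eu e == u -> base (e |: S) = base S.
  move=> /eqP eu_u; apply/setP => i; rewrite !inE.
  by case: (i =P e) => [->|] //=; rewrite eu_u eqxx !andbF.
have -> : \sum_(e | eu e == u) x e * multilinear (gain e) x =
    multilinear (fun S => \sum_(e | eu e == u) (e \in S)%:R * gain e S) x.
  rewrite multilinear_sum; apply: eq_bigr => e eu_u; rewrite multilinear_mem.
  by congr (_ * _); apply: eq_multilinear => S; rewrite /gain baseU1.
rewrite -multilinearD; apply: ler_multilinear => // S.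
have -> : A :|: [set e in S | uncovered A (eu e)] = base S :|: [set e in S | eu e == u].
  apply/setP => i; rewrite !inE; case: eqVneq => [->|_]; rewrite ?Au;
  by case: (i \in A); case: (i \in S); case: (uncovered A (eu i)).
rewrite (le_trans (f_submod _ _)) // lerD2l big_mkcond [leRHS]big_mkcond /=.
apply: ler_sum => e _; rewrite inE.
by case: (e \in S); case: (eu e == u); rewrite ?mul1r ?mul0r.
Qed.

Lemma potential_augment_base e : eu e = u ->
  potential (e |: A) = multilinear (f \o base) x + multilinear (gain e) x.
Proof.
move=> eu_u; rewrite -multilinearD; apply: eq_multilinear => S /=.
rewrite /gain addrC subrK; congr f; apply/setP => i.
rewrite !inE uncovered_setU1 eu_u; case: (i =P e) => [->|_] //=.
by case: (uncovered A (eu i)); rewrite ?andbF //= andbT eq_sym.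
Qed.

Lemma potential_augment_at_ge0 :
  0 <= \sum_(e | eu e == u) x e * (potential (e |: A) - potential A).
Proof.
set K := \sum_(e | eu e == u) x e * multilinear (gain e) x.
have K_ge0 : 0 <= K.
  apply: sumr_ge0 => e _; apply: mulr_ge0; first by case/andP: (x01 e).
  by apply: multilinear_ge0 => // S; rewrite subr_ge0 f_mono ?subsetUr.
apply: le_trans (_ : \sum_(e | eu e == u) x e * (multilinear (gain e) x - K) <= _).
  rewrite (eq_bigr _ (fun e _ => mulrBr _ _ _)) sumrB -mulr_suml -/K.
  by rewrite subr_ge0 ler_piMl ?cap_u.
apply: ler_sum => e /eqP eu_u; apply: ler_wpM2l; first by case/andP: (x01 e).
by rewrite potential_augment_base //; have := potential_le_base; rewrite -/K; lra.
Qed.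

End AtVertex.

Lemma potential_augment_ge0 A :
  0 <= \sum_e x e * (potential (augment A e) - potential A).
Proof.
rewrite (partition_big eu xpredT) //=; apply: sumr_ge0 => u _.
have [Au|Au] := boolP (uncovered A u).
  rewrite (eq_bigr (fun e => x e * (potential (e |: A) - potential A))).
    exact: potential_augment_at_ge0.
  by move=> e /eqP eu_u; rewrite /augment eu_u Au.
by rewrite big1 // => e /eqP eu_u; rewrite /augment eu_u (negbTE Au) subrr mulr0.
Qed.

End Potential.

Section Algorithm.
Variables (R : realType) (U V Ed : finType) (eu : Ed -> U) (ev : Ed -> V).
Variables (T : nat) (p : V -> R) (f : {set Ed} -> R) (x : Ed -> R).

Definition step_prob (a : option V) (c : option Ed) : R :=
  arrival_prob p a * sample_prob ev T p x a c.

Definition alg_value (k : nat) (A : {set Ed}) : R :=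
  \sum_(s : {ffun 'I_k -> option V}) \sum_(c : {ffun 'I_k -> option Ed})
    (\prod_(t < k) step_prob (s t) (c t)) *
      f (foldl (fun M t => alg_step eu ev M (s t) (c t)) A (enum 'I_k)).

Definition mean_next (G : {set Ed} -> R) (A : {set Ed}) : R :=
  G A + \sum_e x e / T%:R * (G (augment eu A e) - G A).

Lemma E_ALG_alg_value : E_ALG eu ev f T p x = alg_value T set0.
Proof. by []. Qed.

Lemma alg_value0 A : alg_value 0 A = f A.
Proof.
rewrite /alg_value (sum_ffun_ord0 _ [ffun=> None]) (sum_ffun_ord0 _ [ffun=> None]).
by rewrite big_ord0 mul1r enum_ord0.
Qed.

Lemma alg_value_step k A : alg_value k.+1 A =
  \sum_a \sum_c step_prob a c * alg_value k (alg_step eu ev A a c).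
Proof.
rewrite /alg_value sum_ffun_ordS; apply: eq_bigr => a _.
under eq_bigr do rewrite sum_ffun_ordS.
rewrite exchange_big /=; apply: eq_bigr => c0 _.
rewrite mulr_sumr; apply: eq_bigr => s _; rewrite mulr_sumr; apply: eq_bigr => c _.
rewrite big_ord_recl !ffun_cons0 mulrA; congr (_ * _ * f _).
  by apply: eq_bigr => i _; rewrite !ffun_consS.
rewrite enum_ordSl /= !ffun_cons0 foldl_map.
by apply: eq_foldl => M t; rewrite !ffun_consS.
Qed.

Hypothesis x_ge0 : forall e, 0 <= x e.
Hypothesis cap_v : forall v, \sum_(e | ev e == v) x e <= T%:R * p v.

(* If T p_v = 0 then the capacity of v forces x_e = 0, so the junk value
   x_e / 0 = 0 of the sampling probability is harmless. *)
Lemma mul_sample_prob v e : ev e = v -> p v * (x e / (T%:R * p v)) = x e / T%:R.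
Proof.
move=> ev_e; have [Tp0|Tp0] := eqVneq (T%:R * p v) 0.
  suff -> : x e = 0 by rewrite !mul0r mulr0.
  apply/eqP; rewrite eq_le x_ge0 andbT -Tp0 (le_trans _ (cap_v v)) //.
  by rewrite (bigD1 e) ?ev_e //= lerDl sumr_ge0.
by move: Tp0; rewrite mulf_eq0 negb_or => /andP[T0 p0]; field; rewrite T0 p0.
Qed.

Lemma expected_step_arrival v G A :
  \sum_c step_prob (Some v) c * G (alg_step eu ev A (Some v) c) =
  p v * G A + \sum_(e | ev e == v) x e / T%:R * (G (augment eu A e) - G A).
Proof.
rewrite sum_option /step_prob /= mulrBr mulr1 mulr_sumr.
rewrite (eq_bigr (fun e => x e / T%:R)) => [|e /eqP]; last exact: mul_sample_prob.
rewrite mulrBl addrAC -addrA; congr (_ + _).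
under [RHS]eq_bigr do rewrite mulrBr.
rewrite sumrB mulr_suml; congr (_ - _).
rewrite [RHS]big_mkcond; apply: eq_bigr => e _ /=.
case: eqP => [ev_e|_]; last by rewrite mulr0 mul0r.
by rewrite mul_sample_prob.
Qed.

Lemma expected_step G A :
  \sum_a \sum_c step_prob a c * G (alg_step eu ev A a c) = mean_next G A.
Proof.
rewrite sum_option (eq_bigr _ (fun v _ => expected_step_arrival v G A)).
rewrite sum_option big1 => [|e _]; last by rewrite /step_prob /= mulr0 mul0r.
rewrite /step_prob /= mulr1 addr0 big_split /= -mulr_suml.
rewrite /mean_next [in RHS](partition_big ev xpredT) //=.
by rewrite addrA -mulrDl subrK mul1r.
Qed.

End Algorithm.

Section Analysis.
Variables (R : realType) (U V Ed : finType) (eu : Ed -> U) (ev : Ed -> V).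
Variables (T : nat) (p : V -> R) (f : {set Ed} -> R) (x : Ed -> R).
Hypothesis T_gt0 : (0 < T)%N.
Hypothesis sum_p_le1 : \sum_v p v <= 1.
Hypothesis hf : monotone_submodular f.
Hypothesis hx : lp_feasible eu ev T p x.

Definition beta k : R := 1 - (1 - T%:R^-1) ^+ k.

Definition potential_mix (b : R) (A : {set Ed}) : R :=
  (1 - b) * f A + b * potential eu f x A.

Let T_pos : (0 : R) < T%:R. Proof. by rewrite ltr0n. Qed.

Let x01 : forall e, 0 <= x e <= 1. Proof. by case: hx. Qed.

Lemma sum_x_le_horizon : \sum_e x e <= T%:R.
Proof.
case: hx => _ cap_v _; rewrite (partition_big ev xpredT) //=.
apply: le_trans (_ : \sum_v T%:R * p v <= _); first exact: ler_sum.
by rewrite -mulr_sumr ler_piMr // ltW.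
Qed.

Lemma le_mean_next (G H : {set Ed} -> R) A :
  (forall B, G B <= H B) -> mean_next eu T x G A <= mean_next eu T x H A.
Proof.
have convexE K : mean_next eu T x K A =
    (1 - (\sum_e x e) / T%:R) * K A + \sum_e x e / T%:R * K (augment eu A e).
  rewrite /mean_next; under eq_bigr do rewrite mulrBr.
  by rewrite sumrB -!mulr_suml; ring.
move=> GH; rewrite !convexE; apply: lerD.
  by rewrite ler_wpM2l // subr_ge0 ler_pdivrMr // mul1r sum_x_le_horizon.
apply: ler_sum => e _; apply: ler_wpM2l => //.
by apply: divr_ge0; [case/andP: (x01 e) | exact: ltW].
Qed.

Lemma beta0 : beta 0 = 0.
Proof. by rewrite /beta expr0 subrr. Qed.

Lemma betaS k : beta k.+1 = beta k + (1 - beta k) / T%:R.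
Proof. by rewrite /beta exprS; field; rewrite lt0r_neq0. Qed.

Lemma beta_itv k : 0 <= beta k <= 1.
Proof.
have q0 : 0 <= 1 - T%:R^-1 :> R by rewrite subr_ge0 invf_le1 // ler1n.
have q1 : 1 - T%:R^-1 <= 1 :> R by rewrite gerBl invr_ge0 ltW.
by rewrite /beta subr_ge0 exprn_ile1 //= gerBl exprn_ge0.
Qed.

Lemma beta_horizon_ge : 1 - expR (-1) <= beta T.
Proof.
rewrite /beta lerD2l lerN2.
have q0 : 0 <= 1 - T%:R^-1 :> R by rewrite subr_ge0 invf_le1 // ler1n.
apply: le_trans (_ : expR (- T%:R^-1) ^+ T <= _).
  by rewrite lerXn2r ?nnegrE ?expR_ge0 // expR_ge1Dx.
by rewrite -expRM_natl mulrN mulfV ?lt0r_neq0.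
Qed.

Lemma potential_mix_set0 b : potential_mix b set0 = b * multilinear f x.
Proof. by case: hf => f0 _ _ _; rewrite /potential_mix potential0 f0 mulr0 add0r. Qed.

Lemma potential_mix_le_mean_next b A : 0 <= b <= 1 ->
  potential_mix (b + (1 - b) / T%:R) A <= mean_next eu T x (potential_mix b) A.
Proof.
move=> /andP[b0 b1]; case: (hx) => _ _ cap_u.
set D := potential eu f x A - f A.
have drift :
    (1 - b) * D <= \sum_e x e * (potential_mix b (augment eu A e) - potential_mix b A).
  have gain_f := potential_sub_le eu hf x01 A.
  have gain_pot := potential_augment_ge0 hf x01 cap_u A.
  have -> : \sum_e x e * (potential_mix b (augment eu A e) - potential_mix b A) =
      (1 - b) * \sum_e x e * (f (augment eu A e) - f A) +
      b * \sum_e x e * (potential eu f x (augment eu A e) - potential eu f x A).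
    rewrite !mulr_sumr -big_split; apply: eq_bigr => e _.
    by rewrite /= /potential_mix; ring.
  by rewrite -/D in gain_f; nra.
have -> : potential_mix (b + (1 - b) / T%:R) A = potential_mix b A + (1 - b) * D / T%:R.
  by rewrite /potential_mix /D; ring.
rewrite /mean_next lerD2l; under [leRHS]eq_bigr do rewrite mulrAC.
by rewrite -mulr_suml ler_wpM2r // invr_ge0 ltW.
Qed.

Lemma potential_mix_beta_le_alg_value k A :
  potential_mix (beta k) A <= alg_value eu ev T p f x k A.
Proof.
elim: k A => [|k IHk] A.
  by rewrite beta0 alg_value0 /potential_mix subr0 mul1r mul0r addr0.
have x_ge0 e : 0 <= x e by case/andP: (x01 e).
have [_ cap_v _] := hx.
rewrite alg_value_step (expected_step eu x_ge0 cap_v) betaS.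
apply: le_trans (potential_mix_le_mean_next _ (beta_itv k)) _.
exact: le_mean_next.
Qed.

End Analysis.

Lemma E_OPT_ge0 (R : realType) (U V Ed : finType) (eu : Ed -> U) (ev : Ed -> V)
    (f : {set Ed} -> R) (T : nat) (p : V -> R) :
  (forall v, 0 <= p v) -> \sum_v p v <= 1 -> 0 <= E_OPT eu ev f T p.
Proof.
move=> p_ge0 sum_p_le1; apply: sumr_ge0 => s _; apply: mulr_ge0.
  by apply: prodr_ge0 => t _; case: (s t) => [v|] //=; rewrite subr_ge0.
exact: bigmax_ge_id.
Qed.

Theorem theorem2 (R : realType) (eps : R) :
  0 < eps ->
  exists (delta : R) (T0 : nat), 0 < delta /\
  forall (U V Ed : finType) (eu : Ed -> U) (ev : Ed -> V)
         (T : nat) (p : V -> R) (f : {set Ed} -> R) (x : Ed -> R),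
    injective (fun e => (eu e, ev e)) ->
    (forall v, 0 <= p v) -> \sum_v p v <= 1 ->
    (forall v, T%:R * p v <= 1) ->
    monotone_submodular f ->
    lp_feasible eu ev T p x ->
    multilinear f x >= (1 - expR (-1)) * E_OPT eu ev f T p ->
    (T0 <= T)%N ->
    (#|U| ^ 2)%:R <= delta * T%:R ->
    E_ALG eu ev f T p x >= ((1 - expR (-1)) ^+ 2 - eps) * E_OPT eu ev f T p.
Proof.
(* The bound E[ALG] >= beta_T F(x) holds for every T >= 1. *)
move=> eps_gt0; exists 1, 1%N; split=> // U V Ed eu ev T p f x _ p_ge0 sum_p_le1 _.
move=> hf hx F_ge T_gt0 _.
have ALG_ge : beta R T T * multilinear f x <= E_ALG eu ev f T p x.
  rewrite E_ALG_alg_value -(potential_mix_set0 eu x hf).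
  exact: potential_mix_beta_le_alg_value.
have OPT_ge0 := E_OPT_ge0 eu ev f T p_ge0 sum_p_le1.
have F_ge0 : 0 <= multilinear f x.
  by have [x01 _ _] := hx; apply: multilinear_ge0 => // S; case: hf.
have c_ge0 : 0 <= 1 - expR (-1) :> R by rewrite subr_ge0 expR_le1 lerN10.
have beta_ge := beta_horizon_ge R T_gt0.
by apply: le_trans ALG_ge; nra.
Qed.
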